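(* Let $\mathcal{E}=(E,\leq,\sharp)$ be a prime event structure, $C$ a configuration of $\mathcal{E}$, and $e,e'\in E$. Suppose there are processes $P_1,P_2,P_3,P_4$ with $\emptyset\triangleright\textsc{espsi}(\mathcal{E},C)\xrightarrow{\overline{e}e}P_1$, $\emptyset\triangleright P_1\xrightarrow{\overline{e'}e'}P_2$, $\emptyset\triangleright\textsc{espsi}(\mathcal{E},C)\xrightarrow{\overline{e'}e'}P_3$, $\emptyset\triangleright P_3\xrightarrow{\overline{e}e}P_4$, and $P_2=P_4$. Then $e\,||\,e'$ in $\mathcal{E}$.
   Context: A prime event structure is a triple $\mathcal{E}=(E,\leq,\sharp)$ where $E$ is a set of events (names from a nominal set), $\leq$ is a partial order on $E$ with $\{d\mid d\leq e\}$ finite for every $e$, and $\sharp$ is an irreflexive symmetric relation on $E$ with conflict heredity ($d\leq e$ and $d\sharp f$ imply $e\sharp f$). Two events are concurrent, $d\,||\,e$, iff none of $d\leq e$, $e\leq d$, $d\sharp e$ holds. A configuration is a finite, conflict-free, downward-closed subset of $E$. Psi-calculus fragment. Processes: assertion processes $(\!|\Psi|\!)$, output prefixes $\overline{M}\langle N\rangle.P$, case processes $\mathbf{case}\ \varphi_1:P_1,\dots,\varphi_n:P_n$, and parallel compositions (also of infinite families). Frames: $\mathcal{F}((\!|\Psi|\!))=\Psi$, $\mathcal{F}(P\mid Q)=\mathcal{F}(P)\otimes\mathcal{F}(Q)$ (composition over all components for families), and the frame of prefixed and case processes is the unit $\mathbf{1}$. Transitions $\Psi\triangleright P\xrightarrow{\alpha}P'$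 are generated by: (Out) if $\Psi\vdash M\leftrightarrow K$ then $\Psi\triangleright\overline{M}\langle N\rangle.P\xrightarrow{\overline{K}N}P$; (Case) if $\Psi\triangleright P_i\xrightarrow{\alpha}P'$ and $\Psi\vdash\varphi_i$ then $\Psi\triangleright\mathbf{case}\ \tilde\varphi:\tilde P\xrightarrow{\alpha}P'$; (Par) if $\Psi\otimes\mathcal{F}(Q)\triangleright P\xrightarrow{\alpha}P'$ then $\Psi\triangleright P\mid Q\xrightarrow{\alpha}P'\mid Q$, symmetrically for $Q$, and for a parallel family one component moves in context $\Psi$ composed with the frames of all other components, the others remaining unchanged. Assertion processes have no transitions. Event-psi instance over $E$: terms are elements of $E$; conditions are pairs $(L,R)$ of subsets of $E$; assertions are subsets of $E$; $\otimes=\cup$; $\mathbf{1}=\emptyset$; entailment: $\Psi\vdash(L,R)$ iff $L\subseteq\Psi$ and $\Psi\cap R=\emptyset$, and $\Psi\vdash a\leftrightarrow b$ iff $a=b$. Translation: $\textsc{espsi}(\mathcal{E},C)=\big|_{e\in E}P_e$ where $P_e=(\!|\{e\}|\!)$ if $e\in C$ and otherwise $P_e=\mathbf{case}\ \varphi_e:\overline{e}\langle e\rangle.(\!|\{e\}|\!)$, with $\varphi_e=(\{d\in E\mid d\leq e,\ d\neq e\},\{d\in E\mid d\sharp e\})$. Processes are compared as $E$-indexed parallel families. The paper writes the transition labelled $\overline{e}e$ simply as $\xrightarrow{e}$. *)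

From Stdlib Require Import List ClassicalDescription.
Import ListNotations.

Set Implicit Arguments.

Record PES (E : Type) := {
  le : E -> E -> Prop;
  conf : E -> E -> Prop;
  le_refl : forall e, le e e;
  le_trans : forall d e f, le d e -> le e f -> le d f;
  le_antisym : forall d e, le d e -> le e d -> d = e;
  le_fin : forall e, exists l : list E, forall d, le d e -> In d l;
  conf_irrefl : forall e, ~ conf e e;
  conf_sym : forall d e, conf d e -> conf e d;
  conf_hered : forall d e f, le d e -> conf d f -> conf e f
}.

Definition concurrent (E : Type) (ES : PES E) (d e : E) : Prop :=
  ~ le ES d e /\ ~ le ES e d /\ ~ conf ES d e.

Definition configuration (E : Type) (ES : PES E) (C : E -> Prop) : Prop :=
  (exists l : list E, forall x, C x -> In x l) /\
  (forall d e, C d -> C e -> ~ conf ES d e) /\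
  (forall d e, le ES d e -> C e -> C d).

Definition assertion (E : Type) := E -> Prop.
Definition condition (E : Type) := ((E -> Prop) * (E -> Prop))%type.

Definition compose (E : Type) (P Q : assertion E) : assertion E :=
  fun x => P x \/ Q x.
Definition unit_assertion (E : Type) : assertion E := fun _ => False.

Definition entails (E : Type) (Psi : assertion E) (phi : condition E) : Prop :=
  (forall x, fst phi x -> Psi x) /\ (forall x, Psi x -> snd phi x -> False).

Definition chan_eq (E : Type) (Psi : assertion E) (a b : E) : Prop := a = b.

Inductive proc (E : Type) : Type :=
| PAssert : assertion E -> proc E
| POut : E -> E -> proc E -> proc E
| PCase : list (condition E * proc E) -> proc E
| PPar : proc E -> proc E -> proc E
| PFam : (E -> proc E) -> proc E.                 (* E-indexed parallel family *)

Arguments PAssert {E}.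
Arguments POut {E}.
Arguments PCase {E}.
Arguments PPar {E}.
Arguments PFam {E}.

Fixpoint frame (E : Type) (P : proc E) : assertion E :=
  match P with
  | PAssert Psi => Psi
  | POut _ _ _ => @unit_assertion E
  | PCase _ => @unit_assertion E
  | PPar P Q => compose (frame P) (frame Q)
  | PFam F => fun x => exists i, frame (F i) x
  end.

Inductive label (E : Type) : Type :=
| LOut : E -> E -> label E.
Arguments LOut {E}.

Inductive trans (E : Type) : assertion E -> proc E -> label E -> proc E -> Prop :=
| TOut : forall Psi M K N P,
    chan_eq Psi M K -> trans Psi (POut M N P) (LOut K N) P
| TCase : forall Psi l phi P a P',
    In (phi, P) l -> trans Psi P a P' -> entails Psi phi ->
    trans Psi (PCase l) a P'
| TParL : forall Psi P Q a P',
    trans (compose Psi (frame Q)) P a P' ->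
    trans Psi (PPar P Q) a (PPar P' Q)
| TParR : forall Psi P Q a Q',
    trans (compose Psi (frame P)) Q a Q' ->
    trans Psi (PPar P Q) a (PPar P Q')
| TFam : forall Psi (F G : E -> proc E) i a,
    trans (compose Psi (fun x => exists j, j <> i /\ frame (F j) x)) (F i) a (G i) ->
    (forall j, j <> i -> G j = F j) ->
    trans Psi (PFam F) a (PFam G).

Definition singleton (E : Type) (e : E) : assertion E := fun x => x = e.

Definition phi_e (E : Type) (ES : PES E) (e : E) : condition E :=
  (fun d => le ES d e /\ d <> e, fun d => conf ES d e).

Definition espsi_comp (E : Type) (ES : PES E) (C : E -> Prop) (e : E) : proc E :=
  if excluded_middle_informative (C e) then PAssert (singleton e)
  else PCase [(phi_e ES e, POut e e (PAssert (singleton e)))].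

Definition espsi (E : Type) (ES : PES E) (C : E -> Prop) : proc E :=
  PFam (espsi_comp ES C).

(* Only the first three transitions matter.  From the initial state an event
   [e] can fire only when it is enabled: [e] is not in [C] and all its strict
   causes are.  If [e] and [e'] both are, neither is a strict cause of the
   other, since a strict cause of an enabled event lies in [C].  Firing [e]
   adds the assertion [{e}] to the frame, which then blocks the case guard of
   every event in conflict with [e]; so [e'] firing next rules out [e # e']. *)
From Stdlib Require Import List Classical ClassicalDescription.
Import ListNotations.

Set Implicit Arguments.

Definition enabled (E : Type) (ES : PES E) (C : E -> Prop) (e : E) : Prop :=
  ~ C e /\ forall d, le ES d e -> d <> e -> C d.

Lemma trans_PAssert_inv (E : Type) Psi (s : assertion E) a Q :
  ~ trans Psi (PAssert s) a Q.
Proof. intro H; inversion H. Qed.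

Lemma trans_PCase_out_inv (E : Type) Psi (phi : condition E) m n P a b Q :
  trans Psi (PCase [(phi, POut m n P)]) (LOut a b) Q ->
  a = m /\ b = n /\ Q = P /\ entails Psi phi.
Proof.
  intro H; inversion H as [|? ? phi0 P0 ? ? Hin Ht Hen| | |]; subst.
  destruct Hin as [Hin|[]]; inversion Hin; subst.
  inversion Ht; subst; unfold chan_eq in *; subst; auto.
Qed.

Lemma trans_PFam_inv (E : Type) Psi (F : E -> proc E) a Q :
  trans Psi (PFam F) a Q -> exists G i,
    trans (compose Psi (fun x => exists j, j <> i /\ frame (F j) x)) (F i) a (G i) /\
    (forall j, j <> i -> G j = F j) /\ Q = PFam G.
Proof. intro H; inversion H; subst; exists G, i; auto. Qed.

Lemma espsi_comp_trans_inv (E : Type) (ES : PES E) C Psi i a Q :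
  trans Psi (espsi_comp ES C i) (LOut a a) Q ->
  ~ C i /\ a = i /\ Q = PAssert (singleton i) /\ entails Psi (phi_e ES i).
Proof.
  unfold espsi_comp; destruct (excluded_middle_informative (C i)) as [Ci|nCi].
  - intro H; exfalso; eapply trans_PAssert_inv; eauto.
  - intro H; apply trans_PCase_out_inv in H as (? & _ & ? & ?); subst; auto.
Qed.

Lemma frame_espsi_comp (E : Type) (ES : PES E) C j x :
  frame (espsi_comp ES C j) x -> C j /\ x = j.
Proof.
  unfold espsi_comp; destruct (excluded_middle_informative (C j));
    simpl; unfold singleton, unit_assertion; tauto.
Qed.

Lemma espsi_step_inv (E : Type) (ES : PES E) C a Q :
  trans (@unit_assertion E) (espsi ES C) (LOut a a) Q ->
  enabled ES C a /\
  exists G, Q = PFam G /\ G a = PAssert (singleton a) /\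
    forall j, j <> a -> G j = espsi_comp ES C j.
Proof.
  intro H; apply trans_PFam_inv in H as (G & i & Ht & HG & ->).
  apply espsi_comp_trans_inv in Ht as (nCi & -> & Gi & [Hcauses _]).
  split; [split; [exact nCi|] | exists G; auto].
  intros d Hle Hne.
  destruct (Hcauses d (conj Hle Hne)) as [[] | (j & _ & Hj)].
  now apply frame_espsi_comp in Hj as [? ->].
Qed.

Lemma espsi_second_step_inv (E : Type) (ES : PES E) C a b Q R :
  trans (@unit_assertion E) (espsi ES C) (LOut a a) Q ->
  trans (@unit_assertion E) Q (LOut b b) R ->
  b <> a /\ ~ conf ES a b.
Proof.
  intros Ha Hb; apply espsi_step_inv in Ha as (_ & G & -> & Ga & HG).
  apply trans_PFam_inv in Hb as (G' & i & Ht & _ & _).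
  destruct (classic (i = a)) as [-> | nia].
  { rewrite Ga in Ht; exfalso; eapply trans_PAssert_inv; eauto. }
  rewrite (HG i nia) in Ht.
  apply espsi_comp_trans_inv in Ht as (_ & <- & _ & [_ Hconf]).
  split; [exact nia|]; intro Hab.
  apply (Hconf a); [right; exists a; rewrite Ga; now split | exact Hab].
Qed.

Lemma enabled_not_le (E : Type) (ES : PES E) C d e :
  enabled ES C d -> enabled ES C e -> d <> e -> ~ le ES d e.
Proof. intros [nCd _] [_ He] Hne Hle; exact (nCd (He d Hle Hne)). Qed.

Theorem mainTheorem4 (E : Type) (ES : PES E) (C : E -> Prop) (e e' : E)
  (P1 P2 P3 P4 : proc E) :
  configuration ES C ->
  trans (@unit_assertion E) (espsi ES C) (LOut e e) P1 ->
  trans (@unit_assertion E) P1 (LOut e' e') P2 ->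
  trans (@unit_assertion E) (espsi ES C) (LOut e' e') P3 ->
  trans (@unit_assertion E) P3 (LOut e e) P4 ->
  P2 = P4 ->
  concurrent ES e e'.
Proof.
  intros _ H1 H2 H3 _ _.
  destruct (espsi_second_step_inv H1 H2) as [Hne Hnconf].
  destruct (espsi_step_inv H1) as [Ee _].
  destruct (espsi_step_inv H3) as [Ee' _].
  split; [|split].
  - exact (enabled_not_le Ee Ee' (not_eq_sym Hne)).
  - exact (enabled_not_le Ee' Ee Hne).
  - exact Hnconf.
Qed.
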